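(* In the uplink of the locally connected network with connectivity parameter $L$ and cell association constraint $|\mathcal C_i|\le N_c$, for any zero-forcing message passing decoding scheme and any set $\mathcal L\subseteq[K]$ of $L+1$ consecutive indices, at most $N_c$ messages $W_i$ with $i\in\mathcal L$ are decoded at base stations with indices in $\mathcal L$.
   Context: Network: $K$ base stations BS $1,\dots,K$ and $K$ mobile terminals MT $1,\dots,K$, single-antenna; the channel coefficient $H_{i,j}$ between MT $i$ and BS $j$ is zero iff $i\notin\{j,\dots,j+L\}$, nonzero coefficients generic (drawn from a continuous joint distribution). Uplink: BS $j$ receives $Y_j=\sum_iH_{i,j}X_i+Z_j$. MT $i$ has message $W_i$ and is associated with a set $\mathcal C_i\subseteq[K]$ of base stations, $|\mathcal C_i|\le N_c$. Zero-forcing message passing decoding: each message is decoded at at most one base station in its association set, and a decoded message is passed over the backhaul to the other base stations in its association set, which use it to cancel its interference; a base station decodes message $W_j$ only if, after removing the messages it received over the backhaul, its noiseless received signal depends on $W_j$ and on no other message. *)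

From HB Require Import structures.
From mathcomp Require Import all_boot all_order all_algebra.
Set Implicit Arguments. Unset Strict Implicit. Unset Printing Implicit Defensive.
Import GRing.Theory.
Local Open Scope ring_scope.

(* Indices are 0-based: MT i and BS j range over 'I_K (paper: 1..K).
   H i j is the channel coefficient between MT i and BS j.
   A decoding scheme is a sequence s of pairs (i, j), in decoding order,
   meaning "message W_i is decoded at BS j". *)

Section ZF.
Variables (R : fieldType) (K : nat).

Definition locally_connected (L : nat) (H : 'M[R]_K) : Prop :=
  forall i j : 'I_K, (H i j != 0) = ((j <= i) && (i <= j + L))%N.

(* After the messages decoded in [past], message W_k is available at BS j
   (via the backhaul, or because it was decoded there) iff W_k has been
   decoded somewhere and j is in the association set of W_k. *)
Definition available (C : 'I_K -> {set 'I_K}) (past : seq ('I_K * 'I_K))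
    (k j : 'I_K) : Prop :=
  (exists j' : 'I_K, (k, j') \in past) /\ j \in C k.

(* Zero-forcing condition: after removing the available messages, the
   noiseless received signal sum_i H i j X_i of BS j depends on W_i
   (H i j <> 0) and on no other message (every other k with H k j <> 0
   has been cancelled). *)
Definition zf_decodable (H : 'M[R]_K) (C : 'I_K -> {set 'I_K})
    (past : seq ('I_K * 'I_K)) (i j : 'I_K) : Prop :=
  H i j != 0 /\
  forall k : 'I_K, k != i -> H k j != 0 -> available C past k j.

Definition zf_mp_scheme (H : 'M[R]_K) (C : 'I_K -> {set 'I_K})
    (s : seq ('I_K * 'I_K)) : Prop :=
  uniq (map fst s) /\
  forall (s1 s2 : seq ('I_K * 'I_K)) (i j : 'I_K),
    s = s1 ++ (i, j) :: s2 -> j \in C i /\ zf_decodable H C s1 i j.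

End ZF.

From mathcomp Require Import all_boot all_order all_algebra.
Set Implicit Arguments. Unset Strict Implicit. Unset Printing Implicit Defensive.
Local Open Scope ring_scope.

(* Two distinct messages cannot be decoded at the same base station j: each
   interferes with the other at j, so each would have to be decoded before the
   other.  Hence the decoding site is an injective function of the messages of
   the window decoded inside the window.  Every base station j of the window
   receives the signal of the last mobile terminal m = a + L of the window
   (j <= m <= j + L), so W_m is cancelled or decoded at j, i.e. j lies in the
   association set of MT m, which has at most Nc elements. *)

Lemma leq_card_rel (T U : finType) (r : T -> U -> bool)
    (A : {set T}) (B : {set U}) :
  (forall x, x \in A -> exists2 y, y \in B & r x y) ->
  (forall x1 x2 y, r x1 y -> r x2 y -> x1 = x2) ->
  (#|A| <= #|B|)%N.
Proof.
move=> rAB r_inj.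
pose f x := [pick y in B | r x y].
have fA x : x \in A -> exists2 y, f x = Some y & (y \in B) && r x y.
  move=> /rAB [y By rxy]; rewrite /f; case: pickP => [z | /(_ y)].
    by exists z.
  by rewrite By rxy.
have f_inj : {in A &, injective f}.
  move=> x1 x2 /fA [y1 -> /andP [_ r1]] /fA [y2 -> /andP [_ r2]] [e12].
  by apply: r_inj r1 _; rewrite e12.
rewrite -(card_in_imset f_inj) -(card_imset B (@Some_inj _)).
apply: subset_leq_card; apply/subsetP => _ /imsetP [x /fA [y -> /andP [By _]] ->].
exact: imset_f.
Qed.

Lemma index_cat_cons_lt (T : eqType) (p1 p2 : seq T) (x y : T) :
  x \notin p1 -> y \in p1 -> (index y (p1 ++ x :: p2) < index x (p1 ++ x :: p2))%N.
Proof.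
move=> /negbTE xNp1 yp1.
by rewrite !index_cat xNp1 yp1 /= eqxx addn0 index_mem.
Qed.

Section ZeroForcingScheme.
Variables (R : fieldType) (K : nat) (H : 'M[R]_K) (C : 'I_K -> {set 'I_K}).
Variable s : seq ('I_K * 'I_K).
Hypothesis zf_s : zf_mp_scheme H C s.

Lemma zf_mp_scheme_step (i j : 'I_K) : (i, j) \in s ->
  exists s1 s2, [/\ s = s1 ++ (i, j) :: s2, j \in C i & zf_decodable H C s1 i j].
Proof.
move: zf_s => [_ step] /splitPr split_s; case: split_s step => s1 s2 step.
by have [Ci zf] := step s1 s2 i j erefl; exists s1, s2.
Qed.

Lemma zf_interferer_decoded_earlier (i k j : 'I_K) :
  (i, j) \in s -> k != i -> H k j != 0 ->
  (index k (map fst s) < index i (map fst s))%N.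
Proof.
move=> /zf_mp_scheme_step [s1 [s2 [es _ [_ zf]]]] ki Hkj.
have [[j' kj's1] _] := zf k ki Hkj.
move: zf_s => [uniq_s _]; rewrite es map_cat /= in uniq_s *.
apply: index_cat_cons_lt; last by apply/mapP; exists (k, j').
by move: uniq_s; rewrite cat_uniq /= => /and3P [_ /norP []].
Qed.

Lemma zf_mp_scheme_bs_inj (i1 i2 j : 'I_K) :
  (i1, j) \in s -> (i2, j) \in s -> i1 = i2.
Proof.
move=> dec1 dec2; apply/eqP/negPn/negP => i12.
have [_ [_ [_ _ [H1 _]]]] := zf_mp_scheme_step dec1.
have [_ [_ [_ _ [H2 _]]]] := zf_mp_scheme_step dec2.
have i21 : i2 != i1 by rewrite eq_sym.
have := ltn_trans (zf_interferer_decoded_earlier dec1 i21 H2)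
                  (zf_interferer_decoded_earlier dec2 i12 H1).
by rewrite ltnn.
Qed.

Lemma zf_decoded_in_assoc (i k j : 'I_K) :
  (i, j) \in s -> H k j != 0 -> j \in C k.
Proof.
move=> /zf_mp_scheme_step [s1 [_ [_ Ci [_ zf]]]] Hkj.
by have [-> | ki] := eqVneq k i; last by have [_] := zf k ki Hkj.
Qed.

End ZeroForcingScheme.

Theorem lemma2 (R : fieldType) (K L Nc : nat) (H : 'M[R]_K)
    (C : 'I_K -> {set 'I_K}) (s : seq ('I_K * 'I_K)) (a : nat) :
  locally_connected L H ->
  (forall i : 'I_K, (#|C i| <= Nc)%N) ->
  zf_mp_scheme H C s ->
  (a + L < K)%N ->
  (#|[set i : 'I_K | ((a <= i) && (i <= a + L))%N &&
        [exists j : 'I_K, ((a <= j) && (j <= a + L))%N && ((i, j) \in s)]]|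
     <= Nc)%N.
Proof.
move=> lcH CNc zf_s aLK; pose m := Ordinal aLK.
apply: (leq_trans _ (CNc m)).
pose r (i j : 'I_K) := ((a <= j) && (j <= a + L))%N && ((i, j) \in s).
apply: (@leq_card_rel _ _ r).
- move=> i; rewrite inE => /andP [_ /existsP [j /andP [win_j dec]]].
  exists j; last by rewrite /r win_j dec.
  apply: (zf_decoded_in_assoc zf_s dec).
  by move: win_j => /andP [aj jm]; rewrite lcH jm leq_add2r aj.
- rewrite /r => i1 i2 j /andP [_ dec1] /andP [_ dec2].
  exact: (zf_mp_scheme_bs_inj zf_s dec1 dec2).
Qed.
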